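(* Let $W\subseteq\mathbb{H}$, let $x\in\mathbb{P}\mathbb{R}_+^d$ be a totally irrational direction, and let $M\in GL_{d+1}(\mathbb{Z})\cap M_{d+1}(\mathbb{N})$. If $W$ has non-empty interior for the topology $\mathcal{T}_x$, then $MW$ has non-empty interior for the topology $\mathcal{T}_{Mx}$.
   Context: $h(y)=\sum_iy_i$ on $\mathbb{R}^{d+1}$, $P=\{h=0\}$, $\mathbb{H}=\{z\in\mathbb{Z}^{d+1}:h(z)\ge0\}$. $\mathbb{P}\mathbb{R}_+^d$ is the set of positive directions, $v(x)$ the $\ell^1$-normalized representative, $Mx=[Mv(x)]$, $\pi_x(z)=z-h(z)v(x)$; $x$ is totally irrational if the coordinates of $v(x)$ are $\mathbb{Q}$-linearly independent. $\mathcal{T}_x$ is the topology on $\mathbb{H}$ whose open sets are $\pi_x^{-1}(U)\cap\mathbb{H}$ with $U\subseteq P$ open. *)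

From HB Require Import structures.
From mathcomp Require Import all_boot all_order all_algebra.
From mathcomp Require Import all_classical all_reals all_analysis.
Set Implicit Arguments. Unset Strict Implicit. Unset Printing Implicit Defensive.
Import numFieldTopology.Exports.
Import Order.TTheory GRing.Theory Num.Theory.
Local Open Scope classical_set_scope.
Local Open Scope ring_scope.

Definition hsum (K : pzRingType) (n : nat) (y : 'cV[K]_n) : K := \sum_i y i 0.

Definition hypP (R : realType) (n : nat) : set 'cV[R]_n := [set y | hsum y = 0].

Definition halfH (n : nat) : set 'cV[int]_n := [set z | 0 <= hsum z].

Definition zR (R : realType) (n : nat) (z : 'cV[int]_n) : 'cV[R]_n :=
  map_mx (fun k : int => k%:~R) z.

(* a positive direction is represented by a vector with positive entries *)
Definition positive_vec (R : realType) (n : nat) (x : 'cV[R]_n) : Prop :=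
  forall i, 0 < x i 0.

Definition vdir (R : realType) (n : nat) (x : 'cV[R]_n) : 'cV[R]_n :=
  (hsum x)^-1 *: x.

Definition totally_irrational (R : realType) (n : nat) (x : 'cV[R]_n) : Prop :=
  forall q : 'I_n -> rat, \sum_i ratr (q i) * vdir x i 0 = 0 -> forall i, q i = 0.

Definition pix (R : realType) (n : nat) (x y : 'cV[R]_n) : 'cV[R]_n :=
  y - hsum y *: vdir x.

Definition openP (R : realType) (n : nat) (U : set 'cV[R]_n) : Prop :=
  exists O : set 'cV[R]_n, open O /\ U = O `&` @hypP R n.

Definition Tx_open (R : realType) (n : nat) (x : 'cV[R]_n) (V : set 'cV[int]_n)
  : Prop :=
  exists U : set 'cV[R]_n, openP U /\
    V = [set z | U (pix x (@zR R n z))] `&` @halfH n.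

Definition Tx_nonempty_interior (R : realType) (n : nat) (x : 'cV[R]_n)
  (W : set 'cV[int]_n) : Prop :=
  exists V, Tx_open x V /\ V !=set0 /\ V `<=` W.

(* Let v = v(x), y = Mx and c = h(Mv) > 0.  For integer z one has
   h(Mz) = h(M pi_x z) + c h(z)  and  pi_x z = pi_x (M^-1 pi_y (Mz)),
   so M maps the basic T_x-open set pi_x^-1(U) /\ H onto the set of w in H with
   pi_x (M^-1 pi_y w) in U (a T_y-open condition) and h(M^-1 w) >= 0.  Only the
   last condition is not open.  Dirichlet's approximation theorem gives integer
   vectors with large h and small pi_x, hence a point z1 of pi_x^-1(U) /\ H with
   h(M z1) >= 0.  If pi_x z lies near pi_x z1 and h(M z) >= 0, then h(z) is
   bounded below; as x is totally irrational, pi_x is injective on Z^(d+1) for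
   d >= 1, so among the finitely many candidates z with h(z - z1) bounded only
   z = z1 has pi_x z close enough to pi_x z1.  Shrinking U around pi_x z1 thus
   forces h(z) >= 0.  For d = 0 the matrix M is 1. *)

From mathcomp Require Import all_boot all_order all_algebra.
From mathcomp Require Import all_classical all_reals all_analysis.
From mathcomp Require Import ring lra zify.
Set Implicit Arguments. Unset Strict Implicit. Unset Printing Implicit Defensive.
Import Order.TTheory GRing.Theory Num.Theory.
Import numFieldTopology.Exports.
Local Open Scope classical_set_scope.
Local Open Scope ring_scope.

Section MatrixNorm.
Variable R : realFieldType.

Lemma mx_norm_ge_entry m n (A : 'M[R]_(m, n)) i j : `|A i j| <= `|A|.
Proof.
rewrite [leRHS]/Num.Def.normr /= mx_normrE.
by apply/bigmax_geP; right; exists (i, j).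
Qed.

Lemma mx_norm_le m n (A : 'M[R]_(m, n)) (K : R) :
  0 <= K -> (forall i j, `|A i j| <= K) -> `|A| <= K.
Proof.
by move=> K0 AK; rewrite [leLHS]/Num.Def.normr /= mx_normrE; apply/bigmax_leP.
Qed.

Lemma mulmx_norm_le m n p (A : 'M[R]_(m, n)) (B : 'M[R]_(n, p)) :
  `|A *m B| <= n%:R * `|A| * `|B|.
Proof.
apply: mx_norm_le => [|i j]; first by rewrite !mulr_ge0.
rewrite mxE (le_trans (ler_norm_sum _ _ _)) //.
have -> : n%:R * `|A| * `|B| = \sum_(k < n) (`|A| * `|B|).
  by rewrite sumr_const card_ord -mulrA mulr_natl.
by apply: ler_sum => k _; rewrite normrM ler_pM ?mx_norm_ge_entry.
Qed.

Lemma continuous_mulmx m n p (A : 'M[R]_(m, n)) :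
  continuous (mulmx A : 'M[R]_(n, p) -> 'M[R]_(m, p)).
Proof.
apply: bounded_linear_continuous; apply/linear_boundedP.
near=> r => B; apply: (le_trans (mulmx_norm_le A B)); exact: ler_wpM2r.
(* The side condition n |A| <= r holds for r near +oo and is left to [near]. *)
Unshelve. all: by end_near.
Qed.

End MatrixNorm.

Section HsumLinear.
Variables (K : pzRingType) (n : nat).
Implicit Types a b : 'cV[K]_n.

Lemma hsumD a b : hsum (a + b) = hsum a + hsum b.
Proof. by rewrite /hsum -big_split; apply: eq_bigr => i _; rewrite mxE. Qed.

Lemma hsumB a b : hsum (a - b) = hsum a - hsum b.
Proof. by rewrite /hsum -sumrB; apply: eq_bigr => i _; rewrite !mxE. Qed.

Lemma hsumZ (k : K) a : hsum (k *: a) = k * hsum a.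
Proof. by rewrite /hsum mulr_sumr; apply: eq_bigr => i _; rewrite mxE. Qed.

Lemma hsum_mx a : hsum a = (const_mx 1 *m a : 'cV[K]_1) 0 0.
Proof. by rewrite mxE; apply: eq_bigr => i _; rewrite mxE mul1r. Qed.

End HsumLinear.

Lemma hsum_gt0 (R : realDomainType) n (p : 'cV[R]_n) :
  (forall i, 0 <= p i 0) -> p != 0 -> 0 < hsum p.
Proof.
move=> p_ge0; apply: contraNT; rewrite -leNgt => hp.
have sum0 : hsum p = 0 by apply/le_anti; rewrite hp /hsum sumr_ge0.
apply/eqP/matrixP => i j; rewrite (ord1 j) mxE.
exact: (psumr_eq0P (fun i _ => p_ge0 i) sum0).
Qed.

Section IntVectors.
Variables (R : realType) (n : nat).
Implicit Types z : 'cV[int]_n.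

Lemma hsum_zR z : hsum (zR R z) = (hsum z)%:~R.
Proof. by rewrite /hsum rmorph_sum; apply: eq_bigr => i _; rewrite mxE. Qed.

Lemma zRD z1 z2 : zR R (z1 + z2) = zR R z1 + zR R z2.
Proof. exact: map_mxD. Qed.

Lemma zRB z1 z2 : zR R (z1 - z2) = zR R z1 - zR R z2.
Proof. exact: map_mxB. Qed.

Lemma zR_mulmx (M : 'M[int]_n) z :
  zR R (M *m z) = map_mx (fun k : int => k%:~R) M *m zR R z.
Proof. exact: map_mxM. Qed.

End IntVectors.

Section Projection.
Variables (R : realType) (n : nat) (x : 'cV[R]_n).
Implicit Types p q : 'cV[R]_n.

Lemma pixE p : pix x p = (1%:M - vdir x *m const_mx 1) *m p.
Proof.
rewrite mulmxBl mul1mx -mulmxA /pix hsum_mx.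
by rewrite [X in vdir x *m X]mx11_scalar mul_mx_scalar.
Qed.

Lemma pixD p q : pix x (p + q) = pix x p + pix x q.
Proof. by rewrite !pixE mulmxDr. Qed.

Lemma pixB p q : pix x (p - q) = pix x p - pix x q.
Proof. by rewrite !pixE mulmxBr. Qed.

Lemma pixZ (k : R) p : pix x (k *: p) = k *: pix x p.
Proof. by rewrite !pixE scalemxAr. Qed.

Lemma pix_decomp p : p = pix x p + hsum p *: vdir x.
Proof. by rewrite subrK. Qed.

Lemma hsum_vdir : hsum x != 0 -> hsum (vdir x) = 1.
Proof. by move=> x0; rewrite /vdir hsumZ mulVf. Qed.

Lemma scale_hsum_vdir : hsum x != 0 -> hsum x *: vdir x = x.
Proof. by move=> x0; rewrite scalerA mulfV ?scale1r. Qed.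

Lemma hsum_pix p : hsum (vdir x) = 1 -> hsum (pix x p) = 0.
Proof. by move=> hv; rewrite /pix hsumB hsumZ hv mulr1 subrr. Qed.

Lemma pix_vdir (k : R) : hsum (vdir x) = 1 -> pix x (k *: vdir x) = 0.
Proof. by move=> hv; rewrite /pix hsumZ hv mulr1 subrr. Qed.

Lemma pix_self : hsum x != 0 -> pix x x = 0.
Proof. by move=> x0; rewrite -{2}(scale_hsum_vdir x0) pix_vdir ?hsum_vdir. Qed.

Lemma continuous_pix : continuous (pix x).
Proof.
rewrite (_ : pix x = mulmx (1%:M - vdir x *m const_mx 1)); first exact: continuous_mulmx.
by apply/funext => p; rewrite pixE.
Qed.

End Projection.

Lemma continuous_hsum (R : realType) n : continuous (@hsum R n).
Proof.
move=> p; rewrite (_ : @hsum R n = (fun A : 'cV[R]_1 => A 0 0) \o mulmx (const_mx 1)).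
  by apply: continuous_comp; [exact: continuous_mulmx | exact: coord_continuous].
by apply/funext => q; rewrite hsum_mx.
Qed.

Section HsumMulmx.
Variables (R : realType) (m n : nat).

Lemma continuous_hsum_mulmx (A : 'M[R]_(m, n)) :
  continuous (fun p : 'cV[R]_n => hsum (A *m p)).
Proof.
by move=> p; apply: continuous_comp; [exact: continuous_mulmx | exact: continuous_hsum].
Qed.

Lemma open_hsum_mulmx_gt (A : 'M[R]_(m, n)) (a : R) :
  open [set p : 'cV[R]_n | a < hsum (A *m p)].
Proof. exact ((continuousP _).1 (continuous_hsum_mulmx (A := A)) _ (@open_gt R a)). Qed.

Lemma open_hsum_mulmx_lt (A : 'M[R]_(m, n)) (a : R) :
  open [set p : 'cV[R]_n | hsum (A *m p) < a].
Proof. exact ((continuousP _).1 (continuous_hsum_mulmx (A := A)) _ (@open_lt R a)). Qed.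

End HsumMulmx.

Section Transport.
Variables (R : realType) (n : nat).
Implicit Types (A : 'M[R]_n) (x p : 'cV[R]_n).

Lemma hsum_mulmx_pix A x p :
  hsum (A *m p) = hsum (A *m pix x p) + hsum p * hsum (A *m vdir x).
Proof. by rewrite {1}(pix_decomp x p) mulmxDr hsumD -scalemxAr hsumZ. Qed.

Lemma pix_mulmx_pix A x p : A \in unitmx -> hsum x != 0 ->
  pix x (invmx A *m pix (A *m x) (A *m p)) = pix x p.
Proof.
move=> A_unit x0; rewrite {2}/pix /vdir mulmxBr mulKmx // -!scalemxAr mulKmx //.
by rewrite pixB !pixZ pix_self // !scaler0 subr0.
Qed.

End Transport.

Section Approximation.
Variable R : realType.

Lemma truncn_eq_dist_lt1 (a b : R) : 0 <= a -> 0 <= b ->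
  Num.truncn a = Num.truncn b -> `|a - b| < 1.
Proof.
move=> a0 b0 ab; have /andP[] := truncn_itv a0; have /andP[] := truncn_itv b0.
rewrite -ab -!natr1 ltr_norml => *; apply/andP; split; lra.
Qed.

Lemma dirichlet_approximation n (v : 'cV[R]_n) (e : R) : 0 < e ->
  exists m : nat, exists u : 'cV[int]_n,
    (0 < m)%N /\ `|zR R u - m%:R *: v| < e.
Proof.
move=> e0; have [Q eQ] : exists Q : nat, Q.+1%:R^-1 < e.
  exists (Num.bound e^-1); rewrite invf_plt ?posrE //.
  by rewrite (lt_trans (archi_boundP _)) ?ltr_nat // invr_ge0 ltW.
pose frac (r : R) := r - (Num.floor r)%:~R.
have frac_itv r : 0 <= frac r < 1.
  by have /andP[] := floor_itv r; rewrite intrD /frac => *; apply/andP; split; lra.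
pose t k i := Num.truncn (Q.+1%:R * frac (k%:R * v i 0)).
have t_lt k i : (t k i < Q.+1)%N.
  have /andP[f0 f1] := frac_itv (k%:R * v i 0).
  by rewrite truncn_lt_nat ?mulr_ge0 // -[ltRHS]mulr1 ltr_pM2l.
pose f (k : 'I_(Q.+1 ^ n).+1) : {ffun 'I_n -> 'I_Q.+1} :=
  [ffun i => Ordinal (t_lt k i)].
(* Pigeonhole: (Q+1)^n + 1 multiples of v, (Q+1)^n boxes of fractional parts. *)
have /injectivePn[k1 [k2 k12 fk]] : ~~ injectiveb f.
  by apply/negP => /injectiveP/leq_card; rewrite card_ffun !card_ord ltnn.
wlog lt12 : k1 k2 k12 fk / (k1 < k2)%N.
  move=> gen; case: (ltngtP k1 k2) => [|lt21|/val_inj eq12]; first exact: gen.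
    by apply: (gen k2 k1) => //; rewrite eq_sym.
  by rewrite eq12 eqxx in k12.
have teq i : t k1 i = t k2 i.
  by have := congr1 (fun g : {ffun 'I_n -> 'I_Q.+1} => val (g i)) fk; rewrite !ffunE.
exists (k2 - k1)%N,
  (\col_i (Num.floor (k2%:R * v i 0) - Num.floor (k1%:R * v i 0))).
split; first by rewrite subn_gt0.
apply: le_lt_trans eQ; apply: mx_norm_le => [|i j]; first by rewrite invr_ge0.
rewrite (ord1 j) /zR !mxE.
have -> : (Num.floor (k2%:R * v i 0) - Num.floor (k1%:R * v i 0))%:~R
    - (k2 - k1)%:R * v i 0 = frac (k1%:R * v i 0) - frac (k2%:R * v i 0).
  by rewrite /frac natrB ?(ltnW lt12) // intrB; ring.
have /andP[a0 _] := frac_itv (k1%:R * v i 0).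
have /andP[b0 _] := frac_itv (k2%:R * v i 0).
have := truncn_eq_dist_lt1 (mulr_ge0 (ler0n _ Q.+1) a0)
  (mulr_ge0 (ler0n _ Q.+1) b0) (teq i).
rewrite -mulrBr normrM ger0_norm // => lt1.
by apply: ltW; rewrite -[X in _ < X]mul1r ltr_pdivlMr // mulrC.
Qed.

Lemma exists_int_large_hsum_small_pix n (x : 'cV[R]_n) (J delta : R) :
  hsum (vdir x) = 1 -> 0 < delta ->
  exists u : 'cV[int]_n, J <= (hsum u)%:~R /\ `|pix x (zR R u)| < delta.
Proof.
move=> hv delta0.
have hsum0 : hsum (0 : 'cV[R]_n) = 0 by rewrite /hsum big1 // => i _; rewrite mxE.
have pix0 : pix x 0 = 0 by rewrite pixE mulmx0.
have small : \forall e \near (0 : 'cV[R]_n), `|hsum e| < 1 /\ `|pix x e| < delta.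
  near=> e; split; near: e; apply: cvgr0_norm_lt => //.
    by rewrite -[X in _ --> X]hsum0; exact: continuous_hsum.
  by rewrite -[X in _ --> X]pix0; exact: continuous_pix.
have [eps eps0 Heps] := nbhs_norm0P.1 small.
have [K JK] : exists K : nat, J < K%:R.
  by exists (Num.bound `|J|); apply: le_lt_trans (ler_norm J) (archi_boundP _).
(* u is close to m K v(x): h u is close to m K >= K, and pi_x u = pi_x (u - m K v(x)). *)
have [m [u [m0 hu]]] := dirichlet_approximation (K%:R *: vdir x) eps0.
set e := zR R u - m%:R *: (K%:R *: vdir x) in hu.
have [he hpe] := Heps e hu.
exists u; split.
  have hs : (hsum u)%:~R = (m * K)%:R + hsum e :> R.
    by rewrite /e hsumB scalerA hsumZ hv hsum_zR natrM; ring.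
  have KmK : K%:R <= (m * K)%:R :> R by rewrite ler_nat leq_pmull.
  have Ku : K%:Z <= hsum u.
    have : (K%:Z - 1)%:~R < (hsum u)%:~R :> R.
      by move: he; rewrite hs intrB ltr_norml => /andP[he _]; lra.
    by rewrite ltr_int; lia.
  by apply: le_trans (ltW JK) _; move: Ku; rewrite -(ler_int R).
suff -> : pix x (zR R u) = pix x e by [].
by rewrite /e pixB scalerA pix_vdir // subr0.
Unshelve. all: by end_near.
Qed.

End Approximation.

Section FiniteMin.
Variable R : realDomainType.

Lemma finite_pos_lower_bound (T : finType) (P : pred T) (f : T -> R) :
  (forall t, P t -> 0 < f t) -> exists2 r, 0 < r & forall t, P t -> r <= f t.
Proof.
move=> fpos; case: (pickP P) => [t0 Pt0|noP]; last by exists 1 => // t; rewrite noP.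
have [t Pt tmin] := arg_minP f Pt0.
by exists (f t); [exact: fpos | exact: tmin].
Qed.

Lemma int_box_pos_lower_bound n (P : pred 'cV[int]_n) (f : 'cV[int]_n -> R)
    (K : nat) :
  (forall u, P u -> 0 < f u) ->
  exists2 r, 0 < r &
    forall u : 'cV[int]_n, (forall i, (absz (u i 0%R) <= K)%N) -> P u -> r <= f u.
Proof.
move=> fpos.
pose enc (t : 'cV['I_K.*2.+1]_n) := map_mx (fun k : 'I_K.*2.+1 => k%:Z - K%:Z) t.
have [r r0 hr] := @finite_pos_lower_bound _ [pred t | P (enc t)] (f \o enc)
  (fun t => fpos (enc t)).
exists r => // u uK Pu.
pose t := map_mx (fun k : int => inord (absz (k + K%:Z)) : 'I_K.*2.+1) u.
suff ut : u = enc t by rewrite ut; apply: hr; rewrite /= -ut.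
apply/matrixP => i j; rewrite [j](_ : _ = 0%R) ?(ord1 j) // !mxE.
by have := uK i; move: (u i 0%R) => a ua; rewrite inordK; lia.
Qed.

End FiniteMin.

Section TotallyIrrational.
Variables (R : realType) (n : nat) (x : 'cV[R]_n).
Hypotheses (n_gt1 : (1 < n)%N) (hv : hsum (vdir x) = 1)
  (x_irr : totally_irrational x).

Lemma pix_int_eq0 (u : 'cV[int]_n) : pix x (zR R u) = 0 -> u = 0.
Proof.
move=> pu0; set m := hsum u.
have uE i : (u i 0)%:~R = m%:~R * vdir x i 0 :> R.
  have := pix_decomp x (zR R u); rewrite pu0 add0r hsum_zR => /matrixP/(_ i 0).
  by rewrite !mxE.
have [m0|m_neq0] := eqVneq m 0.
  by apply/matrixP => i j; rewrite (ord1 j) mxE; apply/eqP; rewrite -(intr_eq0 R) uE m0 mul0r.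
pose i0 : 'I_n := Ordinal (ltnW n_gt1); pose i1 : 'I_n := Ordinal n_gt1.
(* From u = m v(x): m v_i0 - u_i0 (sum_i v_i) = 0 is a nontrivial rational relation. *)
pose q i : rat := (m *+ (i == i0) - u i0 0)%:~R.
have rel : \sum_i ratr (q i) * vdir x i 0 = 0.
  under eq_bigr do rewrite ratr_int intrB rmorphMn mulrBl mulrnAl mulrb.
  rewrite sumrB -big_mkcond big_pred1_eq -mulr_sumr.
  by rewrite -[\sum_i _]/(hsum (vdir x)) hv mulr1 uE subrr.
have /eqP := x_irr rel i0; have /eqP := x_irr rel i1.
rewrite /q eqxx /= !intr_eq0 mulr0n sub0r oppr_eq0 => /eqP u0.
by rewrite u0 subr0 mulr1n (negPf m_neq0).
Qed.

Lemma pix_int_separated (N : R) : exists2 r, 0 < r &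
  forall u : 'cV[int]_n, `|zR R u| <= N -> u != 0 -> r <= `|pix x (zR R u)|.
Proof.
have pos (u : 'cV[int]_n) : u != 0 -> 0 < `|pix x (zR R u)|.
  by move=> u0; rewrite normr_gt0; apply: contra u0 => /eqP/pix_int_eq0 ->.
have [r r0 hr] := @int_box_pos_lower_bound R n (predC1 0)
  (fun u => `|pix x (zR R u)|) (Num.truncn N) pos.
exists r => // u uN u0; apply: hr => // i.
have N0 : 0 <= N := le_trans (normr_ge0 _) uN.
rewrite truncn_ge_nat // natr_absz intr_norm (le_trans _ uN) //.
by have := mx_norm_ge_entry (zR R u) i 0; rewrite /zR mxE.
Qed.

Lemma pix_int_isolated (z1 : 'cV[int]_n) (D : R) : exists2 r, 0 < r &
  forall z, `|pix x (zR R z) - pix x (zR R z1)| < r ->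
    `|(hsum z - hsum z1)%:~R : R| <= D -> z = z1.
Proof.
have [r0 r0_gt0 sep] := pix_int_separated (1 + D * `|vdir x|).
exists (Num.min 1 r0) => [|z]; first by rewrite lt_min ltr01.
rewrite lt_min => /andP[near1 near0] hD; apply/eqP; rewrite -subr_eq0.
apply: contraTT near0 => u0; rewrite -leNgt -pixB -zRB; apply: sep u0.
rewrite {1}(pix_decomp x (zR R (z - z1))) (le_trans (ler_normD _ _)) //.
rewrite normrZ; apply: lerD; first by rewrite zRB pixB ltW.
by rewrite hsum_zR hsumB ler_wpM2r.
Qed.

End TotallyIrrational.

Definition Tx_basic (R : realType) n (x : 'cV[R]_n) (U : set 'cV[R]_n) :
  set 'cV[int]_n := [set z | U (pix x (zR R z)) /\ 0 <= hsum z].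

Lemma Tx_open_basic (R : realType) n (x : 'cV[R]_n) (U : set 'cV[R]_n) :
  hsum (vdir x) = 1 -> open U -> Tx_open x (Tx_basic x U).
Proof.
move=> hv U_open; exists (U `&` @hypP R n); split; first by exists U.
by apply/seteqP; split => z [Uz hz]; split => //; [split => // | case: Uz];
  rewrite /hypP /= hsum_pix.
Qed.

Lemma Tx_open_basicP (R : realType) n (x : 'cV[R]_n) (V : set 'cV[int]_n) :
  hsum (vdir x) = 1 -> Tx_open x V -> exists2 U, open U & V = Tx_basic x U.
Proof.
move=> hv [U [[U0 [U0_open ->]] ->]]; exists U0 => //.
by apply/seteqP; split => z [Uz hz]; split => //; [case: Uz | split => //];
  rewrite /hypP /= hsum_pix.
Qed.

Section Image.
Variables (R : realType) (n : nat) (x : 'cV[R]_n) (M : 'M[int]_n).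
Hypotheses (n_gt1 : (1 < n)%N) (x_pos : positive_vec x)
  (x_irr : totally_irrational x)
  (M_unit : M \in unitmx) (M_ge0 : forall i j, 0 <= M i j).

Local Notation Mr := (map_mx (fun k : int => k%:~R : R) M).
Local Notation y := (Mr *m x).
Local Notation c := (hsum (Mr *m vdir x)).

Lemma Mr_unit : Mr \in unitmx.
Proof. by rewrite unitmxE det_map_mx rmorph_unit // -unitmxE. Qed.

Lemma hsum_x_gt0 : 0 < hsum x.
Proof.
apply: hsum_gt0 => [i|]; first exact: ltW.
by apply: contraTneq (x_pos (Ordinal (ltnW n_gt1))) => ->; rewrite mxE ltxx.
Qed.

Lemma hsum_vdir_x : hsum (vdir x) = 1.
Proof. exact: hsum_vdir (lt0r_neq0 hsum_x_gt0). Qed.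

Lemma c_gt0 : 0 < c.
Proof.
have v_gt0 i : 0 < vdir x i 0 by rewrite mxE mulr_gt0 ?invr_gt0 ?hsum_x_gt0.
apply: hsum_gt0 => [i|].
  by rewrite mxE; apply: sumr_ge0 => j _; rewrite mxE mulr_ge0 ?ler0z // ltW.
apply: contraTneq (v_gt0 (Ordinal (ltnW n_gt1))) => Mv0.
by rewrite -(mulKmx Mr_unit (vdir x)) Mv0 mulmx0 mxE ltxx.
Qed.

Lemma hsum_y : hsum y = hsum x * c.
Proof. by rewrite -{1}(scale_hsum_vdir (lt0r_neq0 hsum_x_gt0)) -scalemxAr hsumZ. Qed.

Lemma hsum_vdir_y : hsum (vdir y) = 1.
Proof.
by apply: hsum_vdir; rewrite hsum_y lt0r_neq0 // mulr_gt0 ?hsum_x_gt0 ?c_gt0.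
Qed.

Lemma hsum_mulmx_int z : (hsum (M *m z))%:~R =
  hsum (Mr *m pix x (zR R z)) + (hsum z)%:~R * c.
Proof. by rewrite -hsum_zR zR_mulmx (hsum_mulmx_pix _ x (zR R z)) hsum_zR. Qed.

Lemma exists_base_point U z0 : open U -> Tx_basic x U z0 ->
  exists z1, Tx_basic x U z1 /\ 0 <= hsum (M *m z1).
Proof.
move=> U_open [Up0 hz0]; set p0 := pix x (zR R z0) in Up0.
set G := U `&` [set p | hsum (Mr *m p0) - 1 < hsum (Mr *m p)].
have /nbhs_ballP[delta delta0 ballG] : nbhs p0 G.
  apply: open_nbhs_nbhs; split; last by split => //=; rewrite ltrBlDr ltrDl.
  by apply: openI => //; exact: open_hsum_mulmx_gt.
set J := `|(1 - hsum (Mr *m p0)) / c|.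
have [u [Ju small]] := exists_int_large_hsum_small_pix J hsum_vdir_x delta0.
have [Up1 Mp1] : G (pix x (zR R (z0 + u))).
  by apply: ballG; rewrite -ball_normE /= zRD pixD opprD addrA subrr add0r normrN.
have hz1 : J <= (hsum (z0 + u))%:~R.
  by apply: le_trans Ju _; rewrite ler_int hsumD lerDr.
have Jc : 1 - hsum (Mr *m p0) <= J * c by rewrite -ler_pdivrMr ?c_gt0 // ler_norm.
have Jz1c : J * c <= (hsum (z0 + u))%:~R * c := ler_wpM2r (ltW c_gt0) hz1.
exists (z0 + u); split.
  by split => //; rewrite -(ler0z R) (le_trans _ hz1) //; exact: normr_ge0.
by move: Mp1; rewrite -(ler0z R) hsum_mulmx_int /=; lra.
Qed.

Lemma locally_hsum_ge0 (z1 : 'cV[int]_n) (B : R) : 0 <= hsum z1 ->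
  exists2 r, 0 < r & forall z,
    `|pix x (zR R z) - pix x (zR R z1)| < r ->
    hsum (Mr *m pix x (zR R z)) < B -> 0 <= hsum (M *m z) -> 0 <= hsum z.
Proof.
move=> hz1; have [r r0 iso] :=
  pix_int_isolated n_gt1 hsum_vdir_x x_irr z1 ((hsum z1)%:~R + B / c).
exists r => // z near_z1 zB hMz; rewrite leNgt; apply/negP => hz.
have hzB : - (B / c) < (hsum z)%:~R.
  by rewrite -mulNr ltr_pdivrMr ?c_gt0 //; move: hMz; rewrite -(ler0z R) hsum_mulmx_int; lra.
have hzR : (hsum z)%:~R < 0 :> R by rewrite ltrz0.
have hz1R : 0 <= (hsum z1)%:~R :> R by rewrite ler0z.
have zz1 : z = z1.
  by apply: iso => //; rewrite intrB ler_norml; apply/andP; split; lra.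
by move: hz; rewrite zz1 ltNge hz1.
Qed.

Lemma Tx_basic_image U z0 : open U -> Tx_basic x U z0 ->
  exists2 U', open U' &
    Tx_basic y U' !=set0 /\ Tx_basic y U' `<=` [set M *m z | z in Tx_basic x U].
Proof.
move=> U_open Uz0.
have [z1 [[Up1 hz1] hMz1]] := exists_base_point U_open Uz0.
set p1 := pix x (zR R z1) in Up1.
set B := hsum (Mr *m p1) + 1.
have [r r0 hsum_ge0] := locally_hsum_ge0 B hz1.
set U2 := U `&` ball p1 r `&` [set p | hsum (Mr *m p) < B].
have back z : pix x (invmx Mr *m pix y (zR R (M *m z))) = pix x (zR R z).
  by rewrite zR_mulmx pix_mulmx_pix ?Mr_unit ?lt0r_neq0 ?hsum_x_gt0.
exists ((fun q => pix x (invmx Mr *m q)) @^-1` U2).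
  have U2_open : open U2.
    apply: openI; first by apply: openI => //; exact: ball_open.
    exact: open_hsum_mulmx_lt.
  apply: (continuousP _).1 U2_open => q.
  by apply: continuous_comp; [exact: continuous_mulmx | exact: continuous_pix].
split.
  exists (M *m z1); split => //=; rewrite back.
  by split; [split => //; exact: ballxx | rewrite /= /B ltrDl].
move=> w [] /=; set z := invmx M *m w.
have -> : w = M *m z by rewrite mulKVmx.
rewrite back => -[[Up bp] Bp] hw; exists z => //; split => //.
by apply: hsum_ge0 => //; move: bp; rewrite -ball_normE /= distrC.
Qed.

End Image.

Lemma unit_ge0_mx11_eq1 (M : 'M[int]_1) :
  M \in unitmx -> (forall i j, 0 <= M i j) -> M = 1%:M.
Proof.
rewrite unitmxE det_mx11 => M_unit M_ge0; rewrite [M]mx11_scalar; congr _%:M.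
by move: M_unit (M_ge0 0 0); rewrite unitrE; case: (M 0 0) => [[|[|k]]|k].
Qed.

Theorem lemma3p17 (R : realType) (d : nat) (W : set 'cV[int]_(d.+1))
  (x : 'cV[R]_(d.+1)) (M : 'M[int]_(d.+1)) :
  W `<=` @halfH d.+1 ->
  positive_vec x -> totally_irrational x ->
  M \in unitmx -> (forall i j, 0 <= M i j) ->
  Tx_nonempty_interior x W ->
  Tx_nonempty_interior (map_mx (fun k : int => k%:~R) M *m x)
    [set M *m z | z in W].
Proof.
move=> _ x_pos x_irr M_unit M_ge0 [V [V_open [[z0 Vz0] VW]]].
case: d => [|d] in W x M V x_pos x_irr M_unit M_ge0 V_open z0 Vz0 VW *.
  rewrite (unit_ge0_mx11_eq1 M_unit M_ge0) map_mx1 mul1mx.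
  by exists V; split=> //; split=> [|z Vz]; [exists z0 | exists z; [exact: VW | exact: mul1mx]].
have n_gt1 : (1 < d.+2)%N by [].
have [U U_open VU] := Tx_open_basicP (hsum_vdir_x n_gt1 x_pos) V_open.
rewrite VU in Vz0 VW.
have [U' U'_open [ne sub]] := Tx_basic_image n_gt1 x_pos x_irr M_unit M_ge0 U_open Vz0.
exists (Tx_basic (map_mx (fun k : int => k%:~R) M *m x) U'); split.
  exact: Tx_open_basic (hsum_vdir_y n_gt1 x_pos M_unit M_ge0) U'_open.
split => // w /sub[z Uz <-]; exists z => //; exact: VW.
Qed.
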